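(* Let $n\ge1$ and $A\subseteq\Omega_n$. Then $\mu_{n+1}(A\times\{0,1\})=\mu_n(A)$.
   Context: For $n\ge1$, $\Omega_n$ is the set of strings $\omega=\alpha_0\alpha_1\cdots\alpha_n$ with $\alpha_k\in\{0,1\}$, $\alpha_0=0$. For $\omega=\alpha_0\cdots\alpha_n$, $\omega'=\alpha'_0\cdots\alpha'_n\in\Omega_n$ let $D^n(\omega,\omega')=2^{-n}\prod_{k=1}^n i^{|\alpha_k-\alpha_{k-1}|}\prod_{k=1}^n i^{-|\alpha'_k-\alpha'_{k-1}|}\,\delta_{\alpha_n\alpha'_n}$ ($i=\sqrt{-1}$), and for $A\subseteq\Omega_n$ let $\mu_n(A)=\sum_{\omega,\omega'\in A}D^n(\omega,\omega')$. For $A\subseteq\Omega_n$, $A\times\{0,1\}=\{\omega0,\omega1:\omega\in A\}\subseteq\Omega_{n+1}$, where $\omega a$ is the string obtained by appending $a$ to the right of $\omega$. *)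

From mathcomp Require Import all_boot all_algebra all_field.
Set Implicit Arguments. Unset Strict Implicit. Unset Printing Implicit Defensive.
Import GRing.Theory Num.Theory.
Local Open Scope ring_scope.

(* A string alpha_0 alpha_1 ... alpha_n is an (n.+1)-tuple of booleans
   (false = 0, true = 1); alpha_k = nth false w k. *)
Definition str (n : nat) := (n.+1).-tuple bool.

Definition Omega (n : nat) : {set str n} :=
  [set w : str n | nth false w 0 == false].

Definition jump (n : nat) (w : str n) (k : nat) : nat :=
  `|(nth false w k : nat)%:Z - (nth false w k.-1 : nat)%:Z|%N.

Definition D (n : nat) (w w' : str n) : algC :=
  (2%:R ^- n) *
  (\prod_(1 <= k < n.+1) 'i ^+ jump w k) *
  (\prod_(1 <= k < n.+1) 'i ^- jump w' k) *
  ((nth false w n == nth false w' n)%:R).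

Definition mu (n : nat) (A : {set str n}) : algC :=
  \sum_(w in A) \sum_(w' in A) D w w'.

Definition extend (n : nat) (A : {set str n}) : {set str n.+1} :=
  [set (rcons_tuple w a : str n.+1) | w in A, a in [set: bool]].

From mathcomp Require Import all_boot all_algebra all_field.
Local Open Scope ring_scope.
From mathcomp Require Import ring.
Import GRing.Theory Num.Theory.

Set Implicit Arguments.
Unset Strict Implicit.
Unset Printing Implicit Defensive.

(* Appending a letter a multiplies D by 2^-1 i^|a - b| i^-|a' - b'| [a = a'],
   where b, b' are the old last letters, and leaves the earlier factors alone.
   Summing over a = a' gives 2^-1 (1 + 1) = 1 when b = b' and
   2^-1 (i^-1 + i) = 0 when b <> b', which is exactly the old factor [b = b']. *)

Lemma absz_sub_bool (a b : bool) : `|(a : nat)%:Z - (b : nat)%:Z|%N = (a != b).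
Proof. by case: a; case: b. Qed.

Lemma jumpE n (w : str n) k : jump w k = (nth false w k != nth false w k.-1).
Proof. exact: absz_sub_bool. Qed.

Lemma nth_rcons_tuple n (u : str n) (a : bool) k :
  nth false (rcons_tuple u a : str n.+1) k =
  if (k < n.+1)%N then nth false u k else if k == n.+1 then a else false.
Proof. by rewrite /= nth_rcons size_tuple. Qed.

Lemma jump_rcons_tuple n (u : str n) (a : bool) k : (k < n.+1)%N ->
  jump (rcons_tuple u a : str n.+1) k = jump u k.
Proof.
move=> lt_k; rewrite !jumpE !nth_rcons_tuple lt_k.
by rewrite (leq_ltn_trans (leq_pred k) lt_k).
Qed.

Lemma jump_rcons_tuple_last n (u : str n) (a : bool) :
  jump (rcons_tuple u a : str n.+1) n.+1 = (a != nth false u n).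
Proof. by rewrite jumpE !nth_rcons_tuple ltnn eqxx ltnSn. Qed.

Lemma prod_jump_rcons_tuple n (u : str n) (a : bool) (e : nat -> algC) :
  \prod_(1 <= k < n.+2) e (jump (rcons_tuple u a : str n.+1) k) =
  (\prod_(1 <= k < n.+1) e (jump u k)) * e (a != nth false u n).
Proof.
rewrite big_nat_recr //= jump_rcons_tuple_last; congr (_ * _).
by apply: eq_big_nat => k /andP[_ lt_k]; rewrite jump_rcons_tuple.
Qed.

Lemma sum_phase_last_letter (b b' : bool) :
  \sum_(a : bool) 'i ^+ (a != b) * 'i ^- (a != b') = 2 * (b == b')%:R :> algC.
Proof.
rewrite big_bool; case: b; case: b' => /=;
  rewrite ?expr0 ?expr1 ?invr1 ?mulr1 ?mul1r ?mulr0 ?mulfV ?neq0Ci ?invCi //.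
all: by rewrite ?addNr ?subrr.
Qed.

Lemma sum_D_rcons_tuple n (u u' : str n) :
  \sum_(a : bool) \sum_(a' : bool)
     D (rcons_tuple u a : str n.+1) (rcons_tuple u' a') = D u u'.
Proof.
pose P := \prod_(1 <= k < n.+1) 'i ^+ jump u k : algC.
pose Q := \prod_(1 <= k < n.+1) 'i ^- jump u' k : algC.
have D_rcons a a' : D (rcons_tuple u a : str n.+1) (rcons_tuple u' a') =
    2^-1 * (2 ^- n * P * Q) *
    ('i ^+ (a != nth false u n) * 'i ^- (a' != nth false u' n)) * (a == a')%:R.
  rewrite /D (prod_jump_rcons_tuple u a (fun j => 'i ^+ j)).
  rewrite (prod_jump_rcons_tuple u' a' (fun j => 'i ^- j)) !nth_rcons_tuple.
  by rewrite ltnn eqxx exprS invfM -/P -/Q; ring.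
under eq_bigr => a _.
  rewrite (bigD1 a) //= big1 => [|a' ne_a'a]; last first.
    by rewrite D_rcons (eq_sym a a') (negPf ne_a'a) mulr0.
  rewrite addr0 D_rcons eqxx mulr1.
  over.
rewrite -mulr_sumr sum_phase_last_letter /D -/P -/Q.
by field; rewrite expf_neq0 ?pnatr_eq0.
Qed.

Lemma big_extend (V : nmodType) n (A : {set str n}) (F : str n.+1 -> V) :
  \sum_(x in extend A) F x = \sum_(w in A) \sum_(a : bool) F (rcons_tuple w a).
Proof.
rewrite /extend curry_imset2X big_imset /=; last first.
  by move=> [w a] [w' a'] _ _ /(congr1 val) /rcons_inj [/val_inj -> ->].
rewrite pair_big_dep /=.
by apply: eq_big => -[w a] //=; rewrite in_setX in_setT andbT.
Qed.

Theorem lemma3p1 (n : nat) (A : {set str n}) :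
  (1 <= n)%N -> A \subset Omega n -> mu (extend A) = mu A.
Proof.
move=> _ _; rewrite /mu big_extend; apply: eq_bigr => w _.
under eq_bigr do rewrite big_extend.
rewrite exchange_big /=; apply: eq_bigr => w' _.
exact: sum_D_rcons_tuple w w'.
Qed.
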